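(* In the setting of the context, with $S(t)=\tilde S e^{(\beta/\gamma)\tilde R}\varphi^{-1}(t)$ for $t\ge0$, we have \[ S(\infty):=\lim_{t\to\infty}S(t)=\tilde S e^{(\beta/\gamma)\tilde R}e^{-(\beta/\gamma)R(\infty)}, \] where $R(\infty):=\lim_{t\to\infty}\bigl(-\frac{\gamma}{\beta}\log\varphi^{-1}(t)\bigr)$, and $S$ is decreasing on $[0,\infty)$ with \[ \tilde S\ge S(t)>\tilde S e^{(\beta/\gamma)\tilde R}e^{-(\beta/\gamma)\alpha}=S(\infty)\quad(t\ge 0). \]
   Context: Let $\beta,\gamma,\delta>0$ be constants and $\tilde S,\tilde E,\tilde I,\tilde R$ real numbers with $N:=\tilde S+\tilde E+\tilde I+\tilde R>0$. Standing assumptions: (A1) $\tilde I>0$; (A2) $\tilde E>(\gamma/\delta)\tilde I$; (A3) $\tilde S>\delta\tilde E/(\beta\tilde I)$; (A4) $\tilde R\ge 0$ and $N>\tilde S e^{(\beta/\gamma)\tilde R}+\tilde R$. Let $\alpha$ be the unique solution in $(\tilde R,N)$ of $x=N-\tilde S e^{(\beta/\gamma)\tilde R}e^{-(\beta/\gamma)x}$, and assume (A5) $\tilde S<(\gamma/\beta)e^{(\beta/\gamma)(\alpha-\tilde R)}$. Put $u_0:=e^{-(\beta/\gamma)\tilde R}$, $u_\infty:=e^{-(\beta/\gamma)\alpha}$. Let $\psi$ be the unique function, continuous and positive on $(u_\infty,u_0]$ and $C^1$ on $(u_\infty,u_0)$, satisfying $\psi'(u)\psi(u)-\frac{\gamma+\delta}{u}\psi(u)=-\delta\,\frac{\beta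 N-\beta\tilde S e^{(\beta/\gamma)\tilde R}u+\gamma\log u}{u}$ on $(u_\infty,u_0)$ and $\psi(u_0)=\beta\tilde I$. Let $\varphi(u):=\int_u^{u_0}\frac{d\xi}{\xi\psi(\xi)}$; $\varphi$ is a strictly decreasing continuous bijection from $(u_\infty,u_0]$ onto $[0,\infty)$, with inverse $\varphi^{-1}:[0,\infty)\to(u_\infty,u_0]$. *)

From Stdlib Require Import Reals.
From Coquelicot Require Import Coquelicot.
Open Scope R_scope.

Definition phi_of (psi : R -> R) (u0 u : R) : R :=
  RInt (fun xi => / (xi * psi xi)) u u0.

(** The integrand [1 / (xi psi xi)] of [phi] is positive on [(u_inf, u0)], so [phi] is
    nonincreasing there, and any right inverse of a nonincreasing map [(u_inf, u0] -> [0, oo)]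
    is strictly decreasing and tends to [u_inf] at infinity (a value [v > u_inf] is only
    reached by times [t <= phi v]).  Since [S] is a positive multiple of [phi^-1], the
    monotonicity, the bounds and the limits follow, with [R(oo) = alpha].  Only the positivity
    and continuity of [psi] matter. *)

From Stdlib Require Import Reals Lra.
From Coquelicot Require Import Coquelicot.
Open Scope R_scope.

Lemma RInt_upper_nonincreasing (f : R -> R) (a b : R) :
  (forall c, a < c < b -> continuous f c) ->
  filterlim f (at_left b) (locally (f b)) ->
  (forall c, a < c < b -> 0 <= f c) ->
  forall x y, a < x -> x <= y -> y <= b -> RInt f y b <= RInt f x b.
Proof.
  intros f_cont f_left f_ge0 x y Hax Hxy Hyb.
  destruct (C0_extension_right f (f b) a b) as [g [g_cont [g_f _]]]; auto; try lra.
  assert (RInt_g : forall z, a < z -> z <= b -> RInt f z b = RInt g z b).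
  { intros z Hz Hzb; apply RInt_ext; intros c Hc.
    rewrite Rmax_right in Hc by lra; symmetry; apply g_f; lra. }
  assert (ex_g : forall z w, a < z -> z <= w -> ex_RInt g z w).
  { intros z w Hz Hzw; apply (ex_RInt_continuous (V := R_CompleteNormedModule)); intros c Hc.
    rewrite Rmin_left in Hc by lra; apply g_cont; lra. }
  rewrite (RInt_g x), (RInt_g y) by lra.
  rewrite <- (RInt_Chasles g x y b) by (apply ex_g; lra).
  assert (0 <= RInt g x y).
  { apply RInt_ge_0; auto.
    intros c Hc; rewrite g_f by lra; apply f_ge0; lra. }
  unfold plus; simpl; lra.
Qed.

Section PhiMonotone.

Variables (psi : R -> R) (a u0 : R).
Hypothesis a_ge0 : 0 <= a.
Hypothesis psi_pos : forall u, a < u <= u0 -> 0 < psi u.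
Hypothesis psi_cont : forall u, a < u < u0 -> continuous psi u.
Hypothesis psi_left : filterlim psi (at_left u0) (locally (psi u0)).

Lemma phi_integrand_left :
  a < u0 -> filterlim (fun xi => / (xi * psi xi)) (at_left u0) (locally (/ (u0 * psi u0))).
Proof.
  intros a_lt_u0.
  apply (filterlim_comp _ _ _ (fun xi => xi * psi xi) Rinv _ (locally (u0 * psi u0))).
  - apply (filterlim_comp_2 (G := locally u0) (H := locally (psi u0)) (fun xi => xi) psi Rmult).
    + apply (filterlim_filter_le_1 (F := locally u0)).
      * apply filter_le_within.
      * apply filterlim_id.
    + exact psi_left.
    + apply (filterlim_mult (K := R_AbsRing)).
  - apply continuous_Rinv, Rgt_not_eq, Rmult_lt_0_compat; [lra | apply psi_pos; lra].
Qed.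

Lemma phi_of_nonincreasing x y :
  a < x -> x <= y -> y <= u0 -> phi_of psi u0 y <= phi_of psi u0 x.
Proof.
  intros Hax Hxy Hyu; unfold phi_of.
  apply (RInt_upper_nonincreasing _ a); auto.
  - intros c Hc; apply continuous_Rinv_comp.
    + apply (continuous_mult (K := R_AbsRing) (fun xi => xi) psi).
      * apply continuous_id.
      * apply psi_cont; lra.
    + apply Rgt_not_eq, Rmult_lt_0_compat; [lra | apply psi_pos; lra].
  - apply phi_integrand_left; lra.
  - intros c Hc; apply Rlt_le, Rinv_0_lt_compat, Rmult_lt_0_compat;
      [lra | apply psi_pos; lra].
Qed.

End PhiMonotone.

Lemma threshold_lower_bounds_pos (beta gamma delta St Et It : R) :
  0 < beta -> 0 < gamma -> 0 < delta -> 0 < It ->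
  Et > gamma / delta * It -> St > delta * Et / (beta * It) -> 0 < St.
Proof.
  intros Hbeta Hgamma Hdelta HIt HEt HSt.
  assert (0 < gamma / delta * It) by (apply Rmult_lt_0_compat; [apply Rdiv_lt_0_compat |]; lra).
  eapply Rlt_trans; [| exact HSt].
  apply Rdiv_lt_0_compat; apply Rmult_lt_0_compat; lra.
Qed.

Section RightInverse.

Variables (g k : R -> R) (a b : R).
Hypothesis g_nonincreasing : forall x y, a < x -> x <= y -> y <= b -> g y <= g x.
Hypothesis k_right_inverse : forall t, 0 <= t -> (a < k t <= b) /\ g (k t) = t.

Lemma right_inverse_decreasing s t : 0 <= s -> s < t -> k t < k s.
Proof.
  intros Hs Hst.
  destruct (k_right_inverse s Hs) as [[Hs1 _] Hs2].
  destruct (k_right_inverse t ltac:(lra)) as [[_ Ht1] Ht2].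
  destruct (Rlt_or_le (k t) (k s)) as [Hlt | Hle]; auto.
  pose proof (g_nonincreasing _ _ Hs1 Hle Ht1); lra.
Qed.

Lemma right_inverse_lim : filterlim k (Rbar_locally p_infty) (locally a).
Proof.
  apply filterlim_locally; intros eps.
  pose proof (cond_pos eps).
  destruct (k_right_inverse 0 (Rle_refl 0)) as [[Ha0 Hb0] _].
  set (v := Rmin (a + eps / 2) b).
  assert (Hav : a < v) by (apply Rmin_glb_lt; lra).
  assert (Hvb : v <= b) by apply Rmin_r.
  assert (Hveps : v <= a + eps / 2) by apply Rmin_l.
  exists (Rmax 0 (g v)); intros t Ht.
  pose proof (Rmax_l 0 (g v)); pose proof (Rmax_r 0 (g v)).
  destruct (k_right_inverse t ltac:(lra)) as [[Ht1 Ht2] Ht3].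
  assert (k t < v).
  { destruct (Rlt_or_le (k t) v) as [Hlt | Hle]; auto.
    pose proof (g_nonincreasing _ _ Hav Hle Ht2); lra. }
  apply Rabs_def1; unfold minus, plus, opp; simpl; lra.
Qed.

End RightInverse.
Theorem theorem8
  (beta gamma delta St Et It Rt alpha : R) (psi phiinv : R -> R)
  (Hbeta : 0 < beta) (Hgamma : 0 < gamma) (Hdelta : 0 < delta)
  (HN : 0 < St + Et + It + Rt)
  (A1 : 0 < It)
  (A2 : Et > (gamma / delta) * It)
  (A3 : St > delta * Et / (beta * It))
  (A4a : 0 <= Rt)
  (A4b : St + Et + It + Rt > St * exp ((beta / gamma) * Rt) + Rt)
  (Halpha_int : Rt < alpha < St + Et + It + Rt)
  (Halpha_eq : alpha = (St + Et + It + Rt)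
                       - St * exp ((beta / gamma) * Rt) * exp (- (beta / gamma) * alpha))
  (A5 : St < (gamma / beta) * exp ((beta / gamma) * (alpha - Rt)))
  (* psi: continuous and positive on (u_inf, u0], C^1 on (u_inf, u0),
     solving the ODE there, with psi(u0) = beta * It *)
  (Hpsi_pos : forall u, exp (- (beta / gamma) * alpha) < u <= exp (- (beta / gamma) * Rt) ->
                        0 < psi u)
  (Hpsi_cont : forall u, exp (- (beta / gamma) * alpha) < u < exp (- (beta / gamma) * Rt) ->
                         continuous psi u)
  (Hpsi_cont_u0 : filterlim psi (at_left (exp (- (beta / gamma) * Rt)))
                            (locally (psi (exp (- (beta / gamma) * Rt)))))
  (Hpsi_C1 : forall u, exp (- (beta / gamma) * alpha) < u < exp (- (beta / gamma) * Rt) ->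
                       ex_derive psi u /\ continuous (Derive psi) u)
  (Hpsi_ode : forall u, exp (- (beta / gamma) * alpha) < u < exp (- (beta / gamma) * Rt) ->
      Derive psi u * psi u - (gamma + delta) / u * psi u
      = - delta * (beta * (St + Et + It + Rt)
                   - beta * St * exp ((beta / gamma) * Rt) * u + gamma * ln u) / u)
  (Hpsi_u0 : psi (exp (- (beta / gamma) * Rt)) = beta * It)
  (* phiinv is the inverse of phi : (u_inf, u0] -> [0, oo) *)
  (Hphiinv : forall t, 0 <= t ->
      exp (- (beta / gamma) * alpha) < phiinv t <= exp (- (beta / gamma) * Rt) /\
      phi_of psi (exp (- (beta / gamma) * Rt)) (phiinv t) = t) :
  let S := fun t => St * exp ((beta / gamma) * Rt) * phiinv t in
  exists Rinf Sinf : R,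
    is_lim (fun t => - (gamma / beta) * ln (phiinv t)) p_infty Rinf /\
    is_lim S p_infty Sinf /\
    Sinf = St * exp ((beta / gamma) * Rt) * exp (- (beta / gamma) * Rinf) /\
    (forall s t, 0 <= s -> s < t -> S t < S s) /\
    (forall t, 0 <= t ->
       St >= S t /\ S t > St * exp ((beta / gamma) * Rt) * exp (- (beta / gamma) * alpha)) /\
    St * exp ((beta / gamma) * Rt) * exp (- (beta / gamma) * alpha) = Sinf.
Proof.
  intros S.
  set (u_inf := exp (- (beta / gamma) * alpha)) in *.
  set (u0 := exp (- (beta / gamma) * Rt)) in *.
  set (C := St * exp ((beta / gamma) * Rt)) in *.
  assert (St_pos : 0 < St) by (apply (threshold_lower_bounds_pos beta gamma delta St Et It); auto).
  assert (C_pos : 0 < C) by (apply Rmult_lt_0_compat; [lra | apply exp_pos]).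
  assert (C_u0 : C * u0 = St).
  { unfold C, u0; rewrite Rmult_assoc, <- exp_plus.
    replace (beta / gamma * Rt + - (beta / gamma) * Rt) with 0 by ring.
    rewrite exp_0; ring. }
  assert (alpha_ln : - (gamma / beta) * ln u_inf = alpha).
  { unfold u_inf; rewrite ln_exp; field; lra. }
  pose proof (phi_of_nonincreasing psi u_inf u0 (Rlt_le _ _ (exp_pos _))
                Hpsi_pos Hpsi_cont Hpsi_cont_u0) as phi_nonincreasing.
  pose proof (right_inverse_lim _ _ _ _ phi_nonincreasing Hphiinv) as phiinv_lim.
  exists alpha, (C * u_inf).
  split; [| split; [| split; [reflexivity | split; [| split; [| reflexivity]]]]].
  - apply (filterlim_comp _ _ _ phiinv (fun u => - (gamma / beta) * ln u) _ _ _ phiinv_lim).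
    simpl; rewrite <- alpha_ln.
    apply (continuous_mult (K := R_AbsRing) (fun _ => - (gamma / beta)) ln).
    + apply continuous_const.
    + apply continuous_ln, exp_pos.
  - apply (filterlim_comp _ _ _ phiinv (fun u => C * u) _ _ _ phiinv_lim).
    apply (continuous_mult (K := R_AbsRing) (fun _ => C) (fun u => u)).
    + apply continuous_const.
    + apply continuous_id.
  - intros s t Hs Hst; apply Rmult_lt_compat_l; auto.
    apply (right_inverse_decreasing _ _ _ _ phi_nonincreasing Hphiinv); auto.
  - intros t Ht; destruct (Hphiinv t Ht) as [[Ht1 Ht2] _]; split.
    + pose proof (Rmult_le_compat_l C _ _ (Rlt_le _ _ C_pos) Ht2); unfold S; lra.
    + apply Rmult_lt_compat_l; auto.
Qed.
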